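(* Let $M$ and $M'$ be as described in the context, with initial-state distribution $\rho$ and horizon $T$. If $\pi'_*$ is an optimal policy on $M'$, i.e. $V'_{\pi'_*}(\rho)\ge V'_{\pi'}(\rho)$ for every policy $\pi'$ on $M'$, then $\phi(\pi'_* )$ is an optimal policy on $M$, i.e. $V_{\phi(\pi'_* )}(\rho)\ge V_{\pi}(\rho)$ for every policy $\pi$ on $M$.
   Context: Fix integers $n\ge 1$ (agents/radars), $m\ge 1$ (targets), a horizon $T\ge 1$, and write $[m]=\{1,\dots,m\}$ and $\dagger$ for an extra ''stop'' symbol not in $[m]$. Let $S$ be a finite state space, $\rho$ a probability distribution on $S$, $\Omega_1,\dots,\Omega_n$ finite individual observation sets, $O(\omega\mid s)$ a probability distribution on $\Omega_1\times\dots\times\Omega_n$ for each $s\in S$, $P(s,\varepsilon,\cdot)$ a probability distribution on $S$ for each $s\in S$ and joint action $\varepsilon=(\varepsilon_1,\dots,\varepsilon_n)\in\mathcal P([m])^n$, and $R:S\times\mathcal P([m])^n\times S\to\mathbb R$ a reward function. The original Dec-POMDP $M$: agent $j$'s action is a subset $\varepsilon_j\subseteq[m]$. A policy on $M$ is $\pi=(\pi_1,\dots,\pi_n)$ with each $\pi_j(\cdot\mid\omega_j)$ a probability distribution on $\mathcal P([m])$ for each $\omega_j\in\Omega_j$. Dynamics: $s_0\sim\rho$; at each step $t=0,\dots,T-1$, $\omega_t=(\omega_{t,1},\dots,\omega_{t,n})\sim O(\cdot\mid s_t)$, each agent independently draws $\varepsilon_{t,j}\sim\pi_j(\cdot\mid\omega_{t,j})$,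 then $s_{t+1}\sim P(s_t,\varepsilon_t,\cdot)$ and reward $R(s_t,\varepsilon_t,s_{t+1})$ is received. $V_\pi(\rho)=\mathbb E\big[\sum_{t=0}^{T-1}R(s_t,\varepsilon_t,s_{t+1})\big]$. The sequential-choice Dec-POMDP $M'$: a policy on $M'$ is $\pi'=(\pi'_1,\dots,\pi'_n)$ where, for each $\omega_j\in\Omega_j$ and $E\subseteq[m]$, $\pi'_j(\cdot\mid\omega_j,E)$ is a probability distribution on $([m]\setminus E)\cup\{\dagger\}$. Dynamics: $s_0\sim\rho$; each round $t=0,\dots,T-1$: an observation $\omega_t\sim O(\cdot\mid s_t)$ is drawn and stays fixed during the round; all selections $\varepsilon_j$ start at $\varnothing$ and no agent is finished. At each micro-step every unfinished agent $j$ independently draws $a_j\sim\pi'_j(\cdot\mid\omega_{t,j},\varepsilon_j)$; if $a_j\in[m]$ then $\varepsilon_j\leftarrow\varepsilon_j\cup\{a_j\}$, if $a_j=\dagger$ agent $j$ becomes finished; the underlying state does not change and reward $0$ is received. When all agents are finished with selections $\varepsilon=(\varepsilon_1,\dots,\varepsilon_n)$, $s_{t+1}\sim P(s_t,\varepsilon,\cdot)$, reward $R(s_t,\varepsilon,s_{t+1})$ is received, and selections are reset to $\varnothing$. $V'_{\pi'}(\rho)$ is the expected total reward over the $T$ rounds. Policy transposition: for a policy $\pi'$ on $M'$, $\phi(\pi')$ is the policy on $M$ with, for each agent $j$, $\omega\in\Omega_j$ and $\varepsilon\subseteq[m]$ with $|\varepsilon|=p$, \[\phi_j(\pi')(\varepsilon\mid\omega)=\sum_{(i_1,\dots,i_p)}\Big(\prod_{l=0}^{p-1}\pi'_j\big(i_{l+1}\mid\omega,\{i_1,\dots,i_l\}\big)\Big)\,\pi'_j(\dagger\mid\omega,\varepsilon),\]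 where the sum ranges over all $p!$ orderings $(i_1,\dots,i_p)$ of the elements of $\varepsilon$ (for $\varepsilon=\varnothing$ this is $\pi'_j(\dagger\mid\omega,\varnothing)$). *)

From HB Require Import structures.
From mathcomp Require Import all_boot all_order all_algebra.
Set Implicit Arguments. Unset Strict Implicit. Unset Printing Implicit Defensive.
Import Order.TTheory GRing.Theory Num.Theory.
Local Open Scope ring_scope.

(* Conventions: agents are 'I_n, targets [m] are 'I_m, the stop symbol
   dagger is [None : option 'I_m] (targets i are [Some i]). *)

Section DecPOMDP.
Variable R : realFieldType.
Variables (n m : nat) (S : finType) (Om : 'I_n -> finType).

Definition jobs := {dffun forall j : 'I_n, Om j}.
Definition jact := {ffun 'I_n -> {set 'I_m}}.

Definition is_distr (T : finType) (p : T -> R) :=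
  (forall x, 0 <= p x) /\ \sum_x p x = 1.

Definition policyM := forall j : 'I_n, Om j -> {set 'I_m} -> R.
Definition valid_policyM (pi : policyM) := forall j w, is_distr (pi j w).

(* policies on M': pi' j w E is a distribution on ([m] \ E) u {dagger} *)
Definition policyM' := forall j : 'I_n, Om j -> {set 'I_m} -> option 'I_m -> R.
Definition valid_policyM' (pi' : policyM') :=
  forall j w E, is_distr (pi' j w E) /\ (forall i, i \in E -> pi' j w E (Some i) = 0).

Variables (O : S -> jobs -> R) (P : S -> jact -> S -> R) (Rw : S -> jact -> S -> R).

(* expected reward over k remaining rounds from state s, given the
   distribution sel w e of the joint action e chosen in a round where the
   joint observation is w *)
Fixpoint value_from (sel : jobs -> jact -> R) (k : nat) (s : S) : R :=
  match k with
  | 0 => 0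
  | k'.+1 => \sum_(w : jobs) O s w * \sum_(e : jact) sel w e *
               \sum_(s' : S) P s e s' * (Rw s e s' + value_from sel k' s')
  end.

Definition V_M (rho : S -> R) (T : nat) (pi : policyM) : R :=
  \sum_(s : S) rho s * value_from (fun w e => \prod_(j : 'I_n) pi j (w j) (e j)) T s.

(* M' : micro-states of a round: for each agent its current selection and
   whether it is finished *)
Definition mstate := {ffun 'I_n -> {set 'I_m} * bool}.

Definition agent_step (pi' : policyM') (j : 'I_n) (w : Om j)
    (x y : {set 'I_m} * bool) : R :=
  if x.2 then (y == x)%:R
  else \sum_(a : option 'I_m) pi' j w x.1 a *
         (y == match a with Some i => (i |: x.1, false) | None => (x.1, true) end)%:R.

Definition micro_step (pi' : policyM') (w : jobs) (x y : mstate) : R :=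
  \prod_(j : 'I_n) agent_step pi' (w j) (x j) (y j).

Fixpoint micro_dist (pi' : policyM') (w : jobs) (k : nat) (y : mstate) : R :=
  match k with
  | 0 => (y == [ffun _ => (set0, false)])%:R
  | k'.+1 => \sum_(x : mstate) micro_dist pi' w k' x * micro_step pi' w x y
  end.

(* distribution of the final joint selection of a round; every agent is
   finished after at most m+1 micro-steps (each micro-step of an unfinished
   agent adds a new target or stops it), so we run m+1 micro-steps. *)
Definition round_dist (pi' : policyM') (w : jobs) (e : jact) : R :=
  \sum_(x : mstate | [forall j, (x j).2 && ((x j).1 == e j)]) micro_dist pi' w m.+1 x.

Definition V_M' (rho : S -> R) (T : nat) (pi' : policyM') : R :=
  \sum_(s : S) rho s * value_from (round_dist pi') T s.

Fixpoint ord_prob (pi' : policyM') (j : 'I_n) (w : Om j) (E : {set 'I_m})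
    (s : seq 'I_m) : R :=
  match s with
  | [::] => pi' j w E None
  | i :: s' => pi' j w E (Some i) * ord_prob pi' w (i |: E) s'
  end.

Definition phi (pi' : policyM') : policyM :=
  fun j w e => \sum_(s <- permutations (enum e)) ord_prob pi' w set0 s.

End DecPOMDP.

From HB Require Import structures.
From mathcomp Require Import all_boot all_order all_algebra.
Set Implicit Arguments. Unset Strict Implicit. Unset Printing Implicit Defensive.
Import Order.TTheory GRing.Theory Num.Theory.
Local Open Scope ring_scope.

(* The proof has two halves.
   1. Value preservation: for every valid policy pi' on M',
      V_M'(pi') = V_M(phi pi').  A round of M' is a synchronous product of
      independent single-agent chains (micro_dist_prod), and the chance that
      one agent ends a round stopped with selection e is the sum, over the
      orderings of e, of the probability of picking e in that order and then
      stopping -- which is exactly phi (agent_dist_final).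
   2. Surjectivity: every valid policy pi on M is phi of a valid policy on
      M'.  The agent draws its set in increasing order: with selection E it
      adds i (larger than all of E) or stops, with probability proportional
      to the pi-mass of the sets having E, resp. i |: E, as lower prefix
      (sorted_kernel); the product of these ratios telescopes to pi e.
   Given pi on M, take pi' with phi pi' = pi; then
   V_M(pi) = V_M'(pi') <= V_M'(pistar) = V_M(phi pistar). *)

Lemma big_option_sum (R : nmodType) (T : finType) (F : option T -> R) :
  \sum_(a : option T) F a = F None + \sum_(i : T) F (Some i).
Proof.
have pe : perm_eq (index_enum (option T)) (None :: map Some (index_enum T)).
  apply: uniq_perm; first exact: index_enum_uniq.
    rewrite /= (map_inj_uniq (@Some_inj _)) index_enum_uniq andbT.
    by apply/mapP => -[].
  by case=> [x|]; rewrite !mem_index_enum //= inE /= (mem_map (@Some_inj _)) mem_index_enum.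
by rewrite (perm_big _ pe) big_cons big_map.
Qed.

Lemma sum_pair (R : nmodType) (T1 T2 : finType) (f : T1 * T2 -> R) :
  \sum_(x : T1 * T2) f x = \sum_(a : T1) \sum_(b : T2) f (a, b).
Proof. by rewrite pair_bigA; apply: eq_bigr => -[]. Qed.

Lemma sum_indicator (R : nzSemiRingType) (T : finType) (a : T) (f : T -> R) :
  \sum_(x : T) (a == x)%:R * f x = f a.
Proof.
rewrite (bigD1 a) //= eqxx mul1r big1 ?addr0 // => x xa.
by rewrite eq_sym (negbTE xa) mul0r.
Qed.

Lemma mem_permutations_enum (T : finType) (e : {set T}) (s : seq T) :
  (s \in permutations (enum e)) = [&& uniq s, [set x in s] == e & size s == #|e|].
Proof.
rewrite mem_permutations; apply/idP/idP.
  move=> pe; have u : uniq s by rewrite (perm_uniq pe) enum_uniq.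
  rewrite u /= (perm_size pe) -cardE eqxx andbT.
  by apply/eqP/setP => x; rewrite inE (perm_mem pe) mem_enum.
case/and3P => u /eqP se _; apply: uniq_perm => //; first exact: enum_uniq.
by move=> x; rewrite mem_enum -se inE.
Qed.

Section Prefix.
Variable m : nat.

Definition prefix_of (E F : {set 'I_m}) :=
  (E \subset F) && [forall x in F :\: E, [forall y in E, (y < x)%N]].

Definition next_elem (E : {set 'I_m}) (i : 'I_m) :=
  (i \notin E) && [forall y in E, (y < i)%N].

Lemma prefix_of_refl E : prefix_of E E.
Proof. by rewrite /prefix_of subxx; apply/forall_inP => x; rewrite setDv inE. Qed.

Lemma prefix_of_next_elem E F i :
  prefix_of E F -> i \in F :\: E -> next_elem E i.
Proof. by case/andP=> _ /forall_inP H iFE; rewrite /next_elem (H i iFE) andbT; case/setDP: iFE. Qed.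

Lemma prefix_of_cons E F i : next_elem E i ->
  prefix_of (i |: E) F = [&& prefix_of E F, i \in F & [forall x in F :\: E, (i <= x)%N]].
Proof.
case/andP=> iE /forall_inP Ei; apply/idP/idP.
  case/andP=> /subsetP sub /forall_inP H.
  have iF : i \in F by apply: sub; rewrite setU11.
  have H' x : x \in F :\: E -> x != i -> forall y, y \in i |: E -> (y < x)%N.
    move=> /setDP[xF xE] xi y yiE.
    by apply: (forall_inP (H x _)); rewrite // !inE (negbTE xi) (negbTE xE) xF.
  rewrite iF /=; apply/andP; split; first (apply/andP; split).
  - by apply/subsetP => x xE; apply: sub; rewrite inE xE orbT.
  - apply/forall_inP => x xFE; apply/forall_inP => y yE.
    case: (eqVneq x i) => [->|xi]; first exact: Ei.
    by apply: H' => //; rewrite inE yE orbT.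
  - apply/forall_inP => x xFE; case: (eqVneq x i) => [->|xi] //.
    by apply: ltnW; apply: H' => //; rewrite setU11.
case/and3P=> /andP[sub /forall_inP HE] iF /forall_inP Hmin.
rewrite /prefix_of subUset sub1set iF sub; apply/forall_inP => x.
rewrite !inE negb_or => /andP[/andP[xi xE] xF].
have xFE : x \in F :\: E by rewrite inE xE xF.
apply/forall_inP => y; rewrite !inE => /orP[/eqP->|yE]; last exact: (forall_inP (HE x xFE)).
by rewrite ltn_neqAle Hmin // andbT eq_sym; apply: contra xi => /eqP/val_inj ->.
Qed.

Lemma card_min_elems (A : {set 'I_m}) :
  #|[set i in A | [forall x in A, (i <= x)%N]]| = (A != set0).
Proof.
have [->|] := eqVneq A set0.
  by apply/eqP; rewrite cards_eq0; apply/eqP/setP => i; rewrite !inE.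
case/set0Pn=> x0 x0A; case: (arg_minnP (fun i : 'I_m => nat_of_ord i) x0A) => i0 i0A i0min.
rewrite /= -(cards1 i0); apply: eq_card => i; rewrite !inE.
apply/andP/eqP => [[iA /forall_inP imin]|->]; last by split=> //; apply/forall_inP.
by apply/val_inj/eqP; rewrite eqn_leq imin // i0min.
Qed.

(* a proper extension F of a prefix E has exactly one possible next element
   of E, namely the least element of F :\: E *)
Lemma count_next_prefix (R : nzSemiRingType) E F :
  \sum_i ((next_elem E i && prefix_of (i |: E) F) : nat)%:R
    = ((prefix_of E F && (F != E)) : nat)%:R :> R.
Proof.
pose A := F :\: E; pose Amin := [set i in A | [forall x in A, (i <= x)%N]].
have term i : next_elem E i && prefix_of (i |: E) F = prefix_of E F && (i \in Amin).
  rewrite inE; case nE: (next_elem E i).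
    rewrite prefix_of_cons //; case: (prefix_of E F) => //=.
    by case/andP: nE => iE _; rewrite inE iE.
  case pEF: (prefix_of E F) => //=; case iA: (i \in A) => //=.
  by rewrite (prefix_of_next_elem pEF iA) in nE.
under eq_bigr => i _ do rewrite term.
case pEF: (prefix_of E F) => /=; last by rewrite big1.
transitivity (\sum_(i in Amin) (1 : R)).
  by rewrite [RHS]big_mkcond; apply: eq_bigr => i _; case: (i \in Amin).
rewrite sumr_const card_min_elems setD_eq0 eqEsubset.
by case/andP: pEF => -> _; rewrite andbT.
Qed.
End Prefix.

Section SingleAgent.
Variables (R : comNzRingType) (m : nat) (q : {set 'I_m} -> option 'I_m -> R).
Hypothesis q_fresh : forall (E : {set 'I_m}) (i : 'I_m), i \in E -> q E (Some i) = 0.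

Fixpoint sel_prob (E : {set 'I_m}) (s : seq 'I_m) : R :=
  match s with [::] => 1 | i :: s' => q E (Some i) * sel_prob (i |: E) s' end.

Fixpoint stop_prob (E : {set 'I_m}) (s : seq 'I_m) : R :=
  match s with [::] => q E None | i :: s' => q E (Some i) * stop_prob (i |: E) s' end.

Lemma stop_probE E s : stop_prob E s = sel_prob E s * q (E :|: [set x in s]) None.
Proof.
elim: s E => [|i s IH] E /=.
  by rewrite mul1r; congr q; apply/setP=> x; rewrite !inE orbF.
rewrite IH mulrA; congr (_ * q _ _); apply/setP=> x; rewrite !inE.
by case: (x == i); rewrite ?orbT //= orbF.
Qed.

Lemma sel_prob_rcons E s i :
  sel_prob E (rcons s i) = sel_prob E s * q (E :|: [set x in s]) (Some i).
Proof.
elim: s E => [|j s IH] E /=.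
  by rewrite mul1r mulr1; congr q; apply/setP=> x; rewrite !inE orbF.
rewrite IH mulrA; congr (_ * q _ _); apply/setP=> x; rewrite !inE.
by case: (x == j); rewrite ?orbT //= orbF.
Qed.

Lemma sel_prob_eq0 (E : {set 'I_m}) s :
  ~~ uniq s || has (fun x => x \in E) s -> sel_prob E s = 0.
Proof.
elim: s E => [|i s IH] E //=.
case iE: (i \in E); first by rewrite q_fresh ?mul0r.
rewrite /= negb_and negbK => H; rewrite IH ?mulr0 //.
case/orP: H => [/orP[i_s|nu]|/hasP[x xs xE]].
- by apply/orP; right; apply/hasP; exists i; rewrite // !inE eqxx.
- by rewrite nu.
- by apply/orP; right; apply/hasP; exists x; rewrite // !inE xE orbT.
Qed.

Definition kernel_step (x y : {set 'I_m} * bool) : R :=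
  if x.2 then (y == x)%:R
  else \sum_(a : option 'I_m) q x.1 a *
         (y == match a with Some i => (i |: x.1, false) | None => (x.1, true) end)%:R.

Fixpoint agent_dist (k : nat) (y : {set 'I_m} * bool) : R :=
  match k with
  | 0 => (y == (set0, false))%:R
  | k'.+1 => \sum_x agent_dist k' x * kernel_step x y
  end.

Fixpoint words (k : nat) : seq (seq 'I_m) :=
  match k with
  | 0 => [:: [::]]
  | k'.+1 => [seq rcons s i | s <- words k', i <- index_enum 'I_m]
  end.

Lemma mem_words k s : (s \in words k) = (size s == k).
Proof.
elim: k s => [|k IH] s /=; first by rewrite inE; case: s.
apply/allpairsP/idP => [[[s' i] /= [s'in _ ->]]|].
  by rewrite size_rcons eqSS -IH.
case/lastP: s => [//|s i]; rewrite size_rcons eqSS => H.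
by exists (s, i); rewrite IH mem_index_enum.
Qed.

Lemma words_uniq k : uniq (words k).
Proof.
elim: k => [|k IH] //=.
apply: allpairs_uniq => //; first exact: index_enum_uniq.
by move=> [s i] [s' i'] _ _ /= /rcons_inj.
Qed.

Lemma agent_dist_running k F :
  agent_dist k (F, false) = \sum_(s <- words k) ([set x in s] == F)%:R * sel_prob set0 s.
Proof.
elim: k F => [|k IH] F /=.
  rewrite big_cons big_nil addr0 mulr1 xpair_eqE andbT.
  by rewrite eq_sym; congr (_ == _)%:R; apply/setP=> x; rewrite !inE.
rewrite sum_pair.
transitivity (\sum_E agent_dist k (E, false) * \sum_i q E (Some i) * (F == i |: E)%:R).
  apply: eq_bigr => E _; rewrite big_bool /kernel_step /= xpair_eqE andbF mulr0 add0r.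
  rewrite big_option_sum /= xpair_eqE andbF mulr0 add0r; congr (_ * _).
  by apply: eq_bigr => i _; rewrite xpair_eqE andbT.
under [LHS]eq_bigr => E _ do rewrite IH big_distrl.
rewrite exchange_big /= big_allpairs_dep /=; apply: eq_bigr => s _.
under eq_bigr => E _ do rewrite -mulrA.
rewrite sum_indicator big_distrr; apply: eq_bigr => i _.
have -> : [set x in rcons s i] = i |: [set x in s].
  by apply/setP=> x; rewrite !inE mem_rcons inE.
by rewrite /= sel_prob_rcons set0U [F == _]eq_sym mulrA mulrC.
Qed.

Lemma agent_dist_stopped k F :
  agent_dist k (F, true) = \sum_(l < k) agent_dist l (F, false) * q F None.
Proof.
elim: k => [|k IH] /=; first by rewrite big_ord0 eqE /= andbF.
rewrite big_ord_recr /= -IH sum_pair.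
have step E : \sum_b agent_dist k (E, b) * kernel_step (E, b) (F, true) =
    (F == E)%:R * agent_dist k (F, true) + (F == E)%:R * (agent_dist k (E, false) * q E None).
  rewrite big_bool /kernel_step /= big_option_sum /= xpair_eqE andbT.
  rewrite big1 ?addr0; last by move=> i _; rewrite xpair_eqE andbF mulr0.
  by case: (eqVneq F E) => [->|ne]; rewrite /= ?mulr1 ?mul1r ?mulr0 ?mul0r ?addr0.
by under eq_bigr => E _ do rewrite step; rewrite big_split /= !sum_indicator.
Qed.

Lemma words_set_sum l e :
  \sum_(s <- words l) ([set x in s] == e)%:R * sel_prob set0 s =
  (l == #|e|)%:R * \sum_(s <- permutations (enum e)) sel_prob set0 s.
Proof.
transitivity (\sum_(s <- words l | uniq s && ([set x in s] == e)) sel_prob set0 s).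
  rewrite [RHS]big_mkcond; apply: eq_bigr => s _.
  case u: (uniq s); case: ([set x in s] == e); rewrite /= ?mul1r ?mul0r //.
  by rewrite sel_prob_eq0 // u.
have [le|ne] := eqVneq l #|e|.
  rewrite mul1r -big_filter; apply: perm_big; apply: uniq_perm.
  - by rewrite filter_uniq // words_uniq.
  - exact: permutations_uniq.
  by move=> s; rewrite mem_filter mem_words mem_permutations_enum le andbA.
rewrite mul0r big1_seq // => s /andP [/andP [u /eqP se]]; rewrite mem_words => /eqP sl.
by move: ne; rewrite -se cardsE -sl; move/card_uniqP: u => ->; rewrite eqxx.
Qed.

(* After m+1 micro-steps, the chance of being stopped with selection e is
   the sum over the orderings of e of selecting e in that order and then
   stopping: the formula defining phi. *)
Lemma agent_dist_final e :
  agent_dist m.+1 (e, true) = \sum_(s <- permutations (enum e)) stop_prob set0 s.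
Proof.
rewrite agent_dist_stopped.
under eq_bigr => l _ do rewrite agent_dist_running words_set_sum -mulrA.
have lt : (#|e| < m.+1)%N by rewrite ltnS (leq_trans (max_card _)) ?card_ord.
rewrite (bigD1 (Ordinal lt)) //= eqxx mul1r [X in _ + X]big1 ?addr0; last first.
  by move=> l; rewrite -val_eqE /= => /negbTE ->; rewrite mul0r.
rewrite big_distrl /=; apply: eq_big_seq => s.
rewrite mem_permutations_enum => /and3P [_ /eqP se _].
by rewrite stop_probE set0U se.
Qed.

End SingleAgent.

Section SortedKernel.
Variables (R : numFieldType) (m : nat) (p : {set 'I_m} -> R).
Hypothesis p_ge0 : forall E, 0 <= p E.
Hypothesis p_sum : \sum_E p E = 1.

Definition prefix_mass (E : {set 'I_m}) : R := \sum_F (prefix_of E F)%:R * p F.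

Definition sorted_kernel (E : {set 'I_m}) (a : option 'I_m) : R :=
  if prefix_mass E == 0 then (a == None)%:R
  else match a with
       | None => p E / prefix_mass E
       | Some i => (next_elem E i)%:R * prefix_mass (i |: E) / prefix_mass E
       end.

Lemma prefix_mass_ge0 E : 0 <= prefix_mass E.
Proof. by apply: sumr_ge0 => F _; rewrite mulr_ge0 ?ler0n. Qed.

(* the sets with prefix E are E itself and, for the unique next element i,
   the sets with prefix i |: E *)
Lemma prefix_mass_split E :
  prefix_mass E = p E + \sum_i (next_elem E i)%:R * prefix_mass (i |: E).
Proof.
rewrite {1}/prefix_mass (bigD1 E) //= prefix_of_refl mul1r; congr (_ + _).
transitivity (\sum_F (\sum_i ((next_elem E i && prefix_of (i |: E) F) : nat)%:R) * p F).
  rewrite big_mkcond; apply: eq_bigr => F _.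
  rewrite count_next_prefix; case: (prefix_of E F); case: eqP => //= _; by rewrite mul0r.
under [LHS]eq_bigr => F _ do rewrite big_distrl.
rewrite exchange_big; apply: eq_bigr => i _.
rewrite /prefix_mass big_distrr; apply: eq_bigr => F _.
by rewrite /= mulrA -natrM mulnb.
Qed.

Lemma prefix_mass_cons_le E i : next_elem E i -> prefix_mass (i |: E) <= prefix_mass E.
Proof.
move=> nEi; apply: ler_sum => F _; apply: ler_wpM2r => //.
case e: (prefix_of (i |: E) F); rewrite ?ler0n //.
by move: e; rewrite prefix_of_cons // => /and3P[->].
Qed.

Lemma p_le_prefix_mass E : p E <= prefix_mass E.
Proof.
rewrite prefix_mass_split lerDl; apply: sumr_ge0 => i _.
by rewrite mulr_ge0 ?ler0n ?prefix_mass_ge0.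
Qed.

Lemma prefix_mass_set0 : prefix_mass set0 = 1.
Proof.
rewrite /prefix_mass -[RHS]p_sum; apply: eq_bigr => F _.
suff -> : prefix_of set0 F by rewrite mul1r.
by rewrite /prefix_of sub0set; apply/forall_inP => x _; apply/forall_inP => y; rewrite inE.
Qed.

Lemma sorted_kernel_ge0 E a : 0 <= sorted_kernel E a.
Proof.
rewrite /sorted_kernel; case: ifP => _; first exact: ler0n.
by case: a => [i|]; rewrite ?divr_ge0 ?mulr_ge0 ?ler0n ?prefix_mass_ge0.
Qed.

Lemma sorted_kernel_sum E : \sum_a sorted_kernel E a = 1.
Proof.
rewrite big_option_sum /sorted_kernel; case: ifP => [_|/negbT nz].
  by rewrite eqxx big1 ?addr0.
by rewrite -big_distrl /= -mulrDl -prefix_mass_split divff.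
Qed.

Lemma sorted_kernel_fresh (E : {set 'I_m}) (i : 'I_m) :
  i \in E -> sorted_kernel E (Some i) = 0.
Proof. by move=> iE; rewrite /sorted_kernel /next_elem iE /=; case: ifP; rewrite ?mul0r. Qed.

Lemma sorted_kernel_next E i : sorted_kernel E (Some i) != 0 -> next_elem E i.
Proof. by rewrite /sorted_kernel; case: ifP => _; case: (next_elem E i); rewrite ?mul0r ?eqxx. Qed.

Definition ord_lt (x y : 'I_m) := (x < y)%N.

Lemma ord_lt_trans : transitive ord_lt.
Proof. by move=> y x z; apply: ltn_trans. Qed.

Lemma sel_prob_sorted_kernel_nz E s : sel_prob sorted_kernel E s != 0 ->
  sorted ord_lt s /\ (forall y, y \in E -> all (ord_lt y) s).
Proof.
elim: s E => [|i s IH] E //=.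
rewrite mulf_eq0 negb_or => /andP [/sorted_kernel_next/andP[_ /forall_inP Ei] /IH[srt H]].
split; first by rewrite (path_sortedE ord_lt_trans) srt andbT H // setU11.
by move=> y yE; rewrite /= /ord_lt Ei //= H // inE yE orbT.
Qed.

(* along an increasing sequence the ratios telescope *)
Lemma sel_prob_sorted s : sorted ord_lt s ->
  sel_prob sorted_kernel set0 s = prefix_mass [set x in s].
Proof.
elim/last_ind: s => [_|s i IH].
  by rewrite /= -prefix_mass_set0; congr prefix_mass; apply/setP => x; rewrite !inE.
rewrite (sorted_pairwise ord_lt_trans) pairwise_rcons -(sorted_pairwise ord_lt_trans).
case/andP => /allP si srt; rewrite sel_prob_rcons set0U IH //.
have -> : [set x in rcons s i] = i |: [set x in s].
  by apply/setP=> x; rewrite !inE mem_rcons inE.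
have nsi : next_elem [set x in s] i.
  rewrite /next_elem inE; apply/andP; split.
    by apply/negP => /si; rewrite /ord_lt ltnn.
  by apply/forall_inP => y; rewrite inE => /si.
rewrite /sorted_kernel nsi mul1r; case: ifP => [/eqP z|/negbT nz].
  by rewrite z mul0r; apply/eqP; rewrite eq_le prefix_mass_ge0 -z prefix_mass_cons_le.
by rewrite mulrCA divff ?mulr1.
Qed.

Lemma enum_sorted (e : {set 'I_m}) : sorted ord_lt (enum e).
Proof.
rewrite /enum_mem -enumT; apply: (sorted_filter ord_lt_trans).
by have := iota_ltn_sorted 0 m; rewrite -val_enum_ord sorted_map.
Qed.

(* the sorted kernel realises p: only the increasing ordering of e
   contributes, with probability prefix_mass e * (p e / prefix_mass e) *)
Lemma stop_prob_sorted_kernel (e : {set 'I_m}) :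
  \sum_(s <- permutations (enum e)) stop_prob sorted_kernel set0 s = p e.
Proof.
rewrite (bigD1_seq (enum e)) /= ?permutations_uniq ?mem_permutations //.
rewrite big1_seq ?addr0; last first.
  move=> s /andP [ne sin]; rewrite stop_probE.
  have [->|/sel_prob_sorted_kernel_nz[srt _]] := eqVneq (sel_prob sorted_kernel set0 s) 0.
    by rewrite mul0r.
  move: ne; rewrite mem_permutations in sin.
  rewrite (irr_sorted_eq ord_lt_trans _ srt (enum_sorted e)) ?eqxx //.
    by move=> x; rewrite /ord_lt ltnn.
  exact: perm_mem.
rewrite stop_probE sel_prob_sorted ?enum_sorted // set0U.
have -> : [set x in enum e] = e by apply/setP => x; rewrite inE mem_enum.
rewrite /sorted_kernel; case: ifP => [/eqP z|/negbT nz].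
  by rewrite z mul0r; apply/eqP; rewrite eq_le p_ge0 -z p_le_prefix_mass.
by rewrite mulrCA divff ?mulr1.
Qed.

End SortedKernel.

Section Transposition.
Variables (R : realFieldType) (n m : nat) (S : finType) (Om : 'I_n -> finType).
Variables (O : S -> jobs Om -> R) (P Rw : S -> jact n m -> S -> R).

Lemma micro_dist_prod (pi' : policyM' R m Om) w k (y : mstate n m) :
  micro_dist pi' w k y = \prod_j agent_dist (pi' j (w j)) k (y j).
Proof.
elim: k y => [|k IH] y /=.
  have [->|ne] := eqVneq y [ffun _ => (set0, false)].
    by rewrite big1 // => j _; rewrite ffunE eqxx.
  have /forallPn[j nj] : ~~ [forall j, y j == (set0, false)].
    by apply: contra ne => /forallP H; apply/eqP/ffunP => j; rewrite ffunE; apply/eqP.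
  by rewrite (bigD1 j) //= (negbTE nj) mul0r.
rewrite bigA_distr_bigA; apply: eq_bigr => x _.
by rewrite IH -big_split.
Qed.

Lemma round_dist_prod (pi' : policyM' R m Om) w (e : jact n m) :
  round_dist pi' w e = \prod_j agent_dist (pi' j (w j)) m.+1 (e j, true).
Proof.
rewrite /round_dist (big_pred1 [ffun j => (e j, true)]).
  by rewrite micro_dist_prod; apply: eq_bigr => j _; rewrite ffunE.
move=> x /=; apply/forallP/eqP => [H|->]; last by move=> j; rewrite ffunE /= eqxx.
by apply/ffunP => j; rewrite ffunE; move: (H j); case: (x j) => a b /= /andP [-> /eqP ->].
Qed.

Lemma ord_probE (pi' : policyM' R m Om) j (w : Om j) E s :
  ord_prob pi' w E s = stop_prob (pi' j w) E s.
Proof. by elim: s E => [|i s IH] E //=; rewrite IH. Qed.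

Lemma phi_agent_dist (pi' : policyM' R m Om) : valid_policyM' pi' ->
  forall j (w : Om j) e, phi pi' w e = agent_dist (pi' j w) m.+1 (e, true).
Proof.
move=> hv j w e; rewrite agent_dist_final; last by move=> E i; case: (hv j w E) => _; apply.
by apply: eq_bigr => s _; rewrite ord_probE.
Qed.

Lemma value_from_ext (sel1 sel2 : jobs Om -> jact n m -> R) :
  (forall w e, sel1 w e = sel2 w e) ->
  forall k s, value_from O P Rw sel1 k s = value_from O P Rw sel2 k s.
Proof.
move=> H; elim=> [|k IH] s //=.
apply: eq_bigr => w _; congr (_ * _); apply: eq_bigr => e _; rewrite H; congr (_ * _).
by apply: eq_bigr => s' _; rewrite IH.
Qed.

Lemma V_M_ext rho T (pi1 pi2 : policyM R m Om) :
  (forall j w e, pi1 j w e = pi2 j w e) -> V_M O P Rw rho T pi1 = V_M O P Rw rho T pi2.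
Proof.
move=> H; apply: eq_bigr => s _; congr (_ * _).
by apply: value_from_ext => w e; apply: eq_bigr => j _; rewrite H.
Qed.

Lemma V_M'_phi rho T (pi' : policyM' R m Om) : valid_policyM' pi' ->
  V_M' O P Rw rho T pi' = V_M O P Rw rho T (phi pi').
Proof.
move=> hv; apply: eq_bigr => s _; congr (_ * _).
apply: value_from_ext => w e; rewrite round_dist_prod; apply: eq_bigr => j _.
by rewrite (phi_agent_dist hv).
Qed.

Definition sorted_policy (pi : policyM R m Om) : policyM' R m Om :=
  fun j w => sorted_kernel (pi j w).

Lemma sorted_policy_valid pi : valid_policyM pi -> valid_policyM' (sorted_policy pi).
Proof.
move=> hpi j w E; have [ge0 _] := hpi j w.
split; last by move=> i; apply: sorted_kernel_fresh.
by split; [exact: sorted_kernel_ge0 | exact: sorted_kernel_sum].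
Qed.

Lemma phi_sorted_policy pi : valid_policyM pi ->
  forall j w e, phi (sorted_policy pi) w e = pi j w e.
Proof.
move=> hpi j w e; have [ge0 sum1] := hpi j w.
rewrite /phi; under eq_bigr => s _ do rewrite ord_probE.
exact: stop_prob_sorted_kernel.
Qed.

End Transposition.

Theorem mainTheorem3 (R : realFieldType) (n m T : nat) (S : finType)
  (Om : 'I_n -> finType)
  (rho : S -> R) (O : S -> jobs Om -> R)
  (P : S -> jact n m -> S -> R) (Rw : S -> jact n m -> S -> R)
  (hn : (0 < n)%N) (hm : (0 < m)%N) (hT : (0 < T)%N)
  (hrho : is_distr rho) (hO : forall s, is_distr (O s))
  (hP : forall s e, is_distr (P s e))
  (pistar : policyM' R m Om) (hstar : valid_policyM' pistar)
  (hopt : forall pi' : policyM' R m Om, valid_policyM' pi' ->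
            V_M' O P Rw rho T pi' <= V_M' O P Rw rho T pistar) :
  forall pi : policyM R m Om, valid_policyM pi ->
    V_M O P Rw rho T pi <= V_M O P Rw rho T (phi pistar).
Proof.
move=> pi hpi; have hv := sorted_policy_valid hpi.
have -> : V_M O P Rw rho T pi = V_M O P Rw rho T (phi (sorted_policy pi)).
  by apply: V_M_ext => j w e; rewrite (phi_sorted_policy hpi).
by rewrite -!V_M'_phi //; apply: hopt.
Qed.
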